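(* Consider an execution of algorithm $\mathcal{A}_2$ (described in the context) in a synchronous message-passing system of $n$ processes with authentication in which up to $t<n$ processes are Byzantine. Then at most $\lfloor \frac{n}{n-t} \rfloor$ distinct values are decided by correct processes.
   Context: Model: synchronous rounds, reliable channels between all pairs, unforgeable signatures, up to $t$ Byzantine processes; the others are correct. The decision $\bot$ counts as a decided value. Terminating Reliable Broadcast (TRB) with sender $p$: $p$ broadcasts a value $m$ and every process delivers either a value or a special value $SF$, satisfying: (Termination) every correct process delivers some value; (Validity) if the sender is correct and broadcasts $m$, every correct process delivers $m$; (Integrity) a process delivers at most once, and if it delivers $m\ne SF$ then $m$ was broadcast by the sender; (Agreement) if a correct process delivers $m$, all correct processes deliver $m$. TRB is implemented in this model in $t+1$ rounds by the classical authenticated signature-chain algorithm. Algorithm $\mathcal{A}_2$, code of $p_i$ with input $v_i$: Phase 1: $n$ instances of TRB are run, instance $q$ having $p_q$ as sender; $p_i$ broadcasts $v_i$ in its own instance and sets $L_i[p_i] := v_i$; for each process $q$, $p_i$ sets $L_i[q]$ to the value (possibly $SF$) delivered in the instance with sender $q$. Phase 2: if at least $n-t$ entries of $L_i$ equal $v_i$, decide $v_i$; else, if some value $v$ appears at least $n-t$ times in $L_i$, decide such a $v$; else decide $\bot$. *)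

From mathcomp Require Import all_boot.
Set Implicit Arguments. Unset Strict Implicit. Unset Printing Implicit Defensive.

(* A delivered value in a TRB
   instance is an [option V]: [Some m] is the value m, [None] is SF.
   A decision is an [option V]: [Some v] is the value v, [None] is bot. *)

(* Outcome of the TRB instances of Phase 1 in an execution:
   [deliv q i] is what process i delivers in the instance whose sender is q.
   [C] is the set of correct processes, [v i] the input of p_i,
   [bcast q m] means that sender q broadcast m in its instance. *)
Definition TRB_spec (n : nat) (V : eqType) (C : {set 'I_n}) (v : 'I_n -> V)
    (bcast : 'I_n -> V -> Prop) (deliv : 'I_n -> 'I_n -> option V) : Prop :=
  (forall q m, q \in C -> (bcast q m <-> m = v q)) /\
  (forall q i, q \in C -> i \in C -> deliv q i = Some (v q)) /\
  (* Integrity (deliver at most once is built into [deliv] being a function;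
     Termination is built into [deliv] being total) *)
  (forall q i m, i \in C -> deliv q i = Some m -> bcast q m) /\
  (forall q i j m, i \in C -> j \in C -> deliv q i = m -> deliv q j = m).

Definition Lvec (n : nat) (V : eqType) (v : 'I_n -> V)
    (deliv : 'I_n -> 'I_n -> option V) (i : 'I_n) : 'I_n -> option V :=
  fun q => if q == i then Some (v i) else deliv q i.

Definition occ (n : nat) (V : eqType) (L : 'I_n -> option V) (w : V) : nat :=
  #|[pred q | L q == Some w]|.

(* Phase 2 rule: [d] is a decision allowed for a process with vector L and
   input vi (the choice "decide such a v" is nondeterministic). *)
Definition phase2 (n t : nat) (V : eqType) (L : 'I_n -> option V) (vi : V)
    (d : option V) : Prop :=
  (n - t <= occ L vi /\ d = Some vi)
  \/ (occ L vi < n - t /\ exists w, n - t <= occ L w /\ d = Some w)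
  \/ (occ L vi < n - t /\ (forall w, occ L w < n - t) /\ d = None).

(* All correct processes end Phase 1 with the same vector L: an entry from a
   correct sender is its input (Validity), any other entry is agreed upon
   (Agreement).  If one correct process decides bot, then no value reaches
   n - t occurrences in L, so every correct process decides bot.  Otherwise
   every decided value occupies at least n - t of the n entries of L, and
   distinct values occupy disjoint entries. *)
From mathcomp Require Import all_boot.
Set Implicit Arguments. Unset Strict Implicit. Unset Printing Implicit Defensive.

Lemma sum_card_preim_uniq (T : finType) (U : eqType) (f : T -> U) (s : seq U) :
  uniq s -> \sum_(x <- s) #|[pred a | f a == x]| = #|[pred a | f a \in s]|.
Proof.
move=> uniq_s; rewrite -sum1_card [RHS]big_mkcond /=.
under eq_bigr => x _ do rewrite -sum1_card big_mkcond /=.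
rewrite exchange_big /=; apply: eq_bigr => a _.
rewrite inE /= -[RHS]/(nat_of_bool (f a \in s)) -(count_uniq_mem (f a) uniq_s).
rewrite -sum1_count [RHS]big_mkcond /=.
by apply: eq_bigr => x _; rewrite inE eq_sym.
Qed.

Lemma uniq_size_mul_leq_card (T : finType) (U : eqType) (f : T -> U)
    (s : seq U) (k : nat) :
  uniq s -> {in s, forall x, k <= #|[pred a | f a == x]|} ->
  size s * k <= #|T|.
Proof.
move=> uniq_s large_preim; apply: leq_trans (max_card [pred a | f a \in s]).
rewrite -sum_card_preim_uniq // mulnC -iter_addn_0 -count_predT -big_const_seq.
by rewrite !big_seq; apply: leq_sum.
Qed.

Section Phase1.

Variables (n : nat) (V : eqType) (C : {set 'I_n}) (v : 'I_n -> V).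
Variables (bcast : 'I_n -> V -> Prop) (deliv : 'I_n -> 'I_n -> option V).
Hypothesis trb : TRB_spec C v bcast deliv.

Lemma Lvec_correct_sender (i q : 'I_n) :
  i \in C -> q \in C -> Lvec v deliv i q = Some (v q).
Proof.
case: trb => _ [validity _] iC qC; rewrite /Lvec.
by case: eqP => [-> | _] //; apply: validity.
Qed.

Lemma Lvec_agree (i j : 'I_n) :
  i \in C -> j \in C -> Lvec v deliv i =1 Lvec v deliv j.
Proof.
move=> iC jC q; have [qC | qNC] := boolP (q \in C).
  by rewrite !Lvec_correct_sender.
have neq_q k : k \in C -> (q == k) = false.
  by move=> kC; apply/eqP => eq_qk; rewrite eq_qk kC in qNC.
case: trb => _ [_ [_ agreement]].
by rewrite /Lvec !neq_q //; apply: (agreement q j i _ jC iC).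
Qed.

Lemma occ_Lvec_agree (i j : 'I_n) :
  i \in C -> j \in C -> occ (Lvec v deliv i) =1 occ (Lvec v deliv j).
Proof.
by move=> iC jC w; apply: eq_card => q; rewrite !inE (Lvec_agree iC jC).
Qed.

End Phase1.

Section Phase2.

Variables (n t : nat) (V : eqType).

Lemma phase2_Some_quorum (L : 'I_n -> option V) (vi w : V) :
  phase2 t L vi (Some w) -> n - t <= occ L w.
Proof. by case=> [[? [->]] | [[_ [? [? [->]]]] | [_ [_ //]]]]. Qed.

Lemma phase2_None_no_quorum (L : 'I_n -> option V) (vi : V) :
  phase2 t L vi None -> forall w, occ L w < n - t.
Proof. by case=> [[_ //] | [[_ [w [_ //]]] | [_ []]]]. Qed.

Lemma phase2_None_all (L1 L2 : 'I_n -> option V) (vi vj : V) (d : option V) :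
  occ L1 =1 occ L2 -> phase2 t L1 vi None -> phase2 t L2 vj d -> d = None.
Proof.
move=> eq_occ /phase2_None_no_quorum no_quorum.
case: d => // w /phase2_Some_quorum.
by rewrite -eq_occ leqNgt no_quorum.
Qed.

End Phase2.

Theorem lemma10 (n t : nat) (V : eqType) (C : {set 'I_n}) (v : 'I_n -> V)
    (bcast : 'I_n -> V -> Prop) (deliv : 'I_n -> 'I_n -> option V)
    (dec : 'I_n -> option V) :
  t < n ->
  n - t <= #|C| ->
  TRB_spec C v bcast deliv ->
  (forall i, i \in C -> phase2 t (Lvec v deliv i) (v i) (dec i)) ->
  size (undup [seq dec i | i <- enum C]) <= n %/ (n - t).
Proof.
move=> lt_tn quorum_C trb decP; set D := undup _.
have nt_gt0 : 0 < n - t by rewrite subn_gt0.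
have memD x : x \in D -> exists2 j, j \in C & x = dec j.
  by rewrite mem_undup => /mapP[j]; rewrite mem_enum; exists j.
have occE := occ_Lvec_agree trb.
have [NoneD | NoneND] := boolP (None \in D).
  have [i iC deci] := memD _ NoneD.
  have decNi : phase2 t (Lvec v deliv i) (v i) None by rewrite deci; apply: decP.
  have sub_D : {subset D <= [:: None]}.
    move=> _ /memD[j jC ->].
    by rewrite inE (phase2_None_all (occE _ _ iC jC) decNi (decP j jC)).
  apply: leq_trans (uniq_leq_size (undup_uniq _) sub_D) _.
  by rewrite divn_gt0 // leq_subr.
have [i0 i0C] : exists i0, i0 \in C by apply/card_gt0P; apply: leq_trans quorum_C.
rewrite leq_divRL // -{2}(card_ord n).
apply: (@uniq_size_mul_leq_card _ _ (Lvec v deliv i0) D) => [|[w|] xD].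
- exact: undup_uniq.
- have [j jC decj] := memD _ xD; move: (decP j jC); rewrite -decj.
  by move/phase2_Some_quorum; rewrite (occE _ _ jC i0C).
- by rewrite xD in NoneND.
Qed.
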